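(* Let $\gamma$ be an orbit of the regularized planar two-center problem lying on a regular torus $\mathbb{T}$ with rotation number $W$, and suppose that $\gamma$ (followed for all times $\tau\in\mathbb{R}$) passes through a collision point at exactly one time. Then $W$ is irrational.
   Context: Fix $d>0$ and masses $m_1,m_2>0$ at $(-d,0)$ and $(d,0)$. A test particle moves with Hamiltonian $H=\tfrac12(p_x^2+p_y^2)-m_1/\sqrt{(x+d)^2+y^2}-m_2/\sqrt{(x-d)^2+y^2}$; energies $h<0$. Regularization: $(\lambda,\nu)\in\mathbb{R}\times(\mathbb{R}/2\pi\mathbb{Z})$ with $x+iy=d\sin(\nu+i\lambda)$ (a double cover branched over the centers), conjugate momenta $p_\lambda,p_\nu$, time change $dt=d^2(\cosh^2\lambda-\sin^2\nu)\,d\tau$. On $H=h$ the motion becomes the flow (time $\tau$, defined also through collisions) of $H_\lambda+H_\nu$ on its zero level, $H_\lambda=\tfrac12p_\lambda^2-d(m_1+m_2)\cosh\lambda-hd^2\cosh^2\lambda$, $H_\nu=\tfrac12p_\nu^2+d(m_1-m_2)\sin\nu+hd^2\sin^2\nu$; orbits lie in sets $\{H_\lambda=-g,\ H_\nu=g\}$ for a separation constant $g$. Regular torus: a compact connected component $\mathbb{T}=C_\lambda\times C_\nu$ of such a set with $-g$ a regular value of $H_\lambda$ and $g$ a regular value of $H_\nu$ ($C_\lambda$ a closed curve in the $(\lambda,p_\lambda)$-plane, $C_\nu$ a closed curve in the cylinder $(\mathbb{R}/2\pi\mathbb{Z})\times\mathbb{R}$). Rotation number $W=T_\nu/T_\lambda$,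 where $T_\lambda,T_\nu$ are the $\tau$-periods of the motions on $C_\lambda,C_\nu$; in angle coordinates $\theta_1$ along $C_\nu$, $\theta_2$ along $C_\lambda$ (each in $\mathbb{R}/\mathbb{Z}$, increasing uniformly in $\tau$ with period 1) orbits on $\mathbb{T}$ lift to lines $\theta_2=W\theta_1+\mathrm{const}$. Collision points are the points of $\mathbb{T}$ with $\lambda=0$ and $\nu\equiv\pm\pi/2\pmod{2\pi}$ (they project to the two centers). *)

From HB Require Import structures.
From mathcomp Require Import all_boot all_order all_algebra.
From mathcomp Require Import all_classical all_reals all_analysis.
Set Implicit Arguments. Unset Strict Implicit. Unset Printing Implicit Defensive.
Import Order.TTheory GRing.Theory Num.Theory.
Import numFieldNormedType.Exports.
Local Open Scope classical_set_scope.
Local Open Scope ring_scope.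

Section TwoCenter.
Variable R : realType.

Definition cosh (x : R) : R := (expR x + expR (- x)) / 2.

Definition Hlam (d m1 m2 h : R) (l p : R) : R :=
  p ^+ 2 / 2 - d * (m1 + m2) * cosh l - h * d ^+ 2 * (cosh l) ^+ 2.

(* H_nu(nu, p_nu), nu a real lift of the angle *)
Definition Hnu (d m1 m2 h : R) (n p : R) : R :=
  p ^+ 2 / 2 + d * (m1 - m2) * sin n + h * d ^+ 2 * (sin n) ^+ 2.

Definition d1 (F : R -> R -> R) (x y : R) : R := derive1 (fun x0 => F x0 y) x.
Definition d2 (F : R -> R -> R) (x y : R) : R := derive1 (fun y0 => F x y0) y.

Definition regular_value (F : R -> R -> R) (c : R) : Prop :=
  forall x y, F x y = c -> d1 F x y != 0 \/ d2 F x y != 0.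

(* Phase space R x (R/2piZ) x R^2, with the circle factor embedded in R^2:
   a point is ((lambda, p_lambda), ((cos nu, sin nu), p_nu)). *)
Definition phase_pt (l pl n pn : R) : (R * R) * ((R * R) * R) :=
  ((l, pl), ((cos n, sin n), pn)).

Definition level_set (d m1 m2 h g : R) : set ((R * R) * ((R * R) * R)) :=
  [set x | Hlam d m1 m2 h x.1.1 x.1.2 = - g /\
           exists n, x.2.1 = (cos n, sin n) /\ Hnu d m1 m2 h n x.2.2 = g].

Definition regular_torus (d m1 m2 h g : R) (T : set ((R * R) * ((R * R) * R))) :=
  [/\ exists2 x, level_set d m1 m2 h g x & T = connected_component (level_set d m1 m2 h g) x,
      compact T,
      regular_value (Hlam d m1 m2 h) (- g) &
      regular_value (Hnu d m1 m2 h) g].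

Definition is_orbit (d m1 m2 h : R) (l pl n pn : R -> R) : Prop :=
  forall t : R,
  [/\ is_derive t 1 l (d2 (Hlam d m1 m2 h) (l t) (pl t)),
      is_derive t 1 pl (- d1 (Hlam d m1 m2 h) (l t) (pl t)),
      is_derive t 1 n (d2 (Hnu d m1 m2 h) (n t) (pn t)) &
      is_derive t 1 pn (- d1 (Hnu d m1 m2 h) (n t) (pn t))].

Definition lam_period (l pl : R -> R) (P : R) : Prop :=
  forall t, l (t + P) = l t /\ pl (t + P) = pl t.
Definition least_lam_period (l pl : R -> R) (P : R) : Prop :=
  [/\ 0 < P, lam_period l pl P &
      forall P', 0 < P' -> lam_period l pl P' -> P <= P'].

(* T_nu: least positive period of the motion (nu mod 2pi, p_nu) on the cylinder *)
Definition nu_period (n pn : R -> R) (P : R) : Prop :=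
  forall t, (exists k : int, n (t + P) = n t + 2 * pi * k%:~R) /\ pn (t + P) = pn t.
Definition least_nu_period (n pn : R -> R) (P : R) : Prop :=
  [/\ 0 < P, nu_period n pn P &
      forall P', 0 < P' -> nu_period n pn P' -> P <= P'].

Definition collision_at (l n : R -> R) (t : R) : Prop :=
  l t = 0 /\ exists k : int,
    n t = pi / 2 + 2 * pi * k%:~R \/ n t = - (pi / 2) + 2 * pi * k%:~R.

End TwoCenter.

(* If W = T_nu / T_lambda were rational, some positive multiple of T_lambda
   would also be a multiple of T_nu, hence a common period of the motions on
   C_lambda and on C_nu; the orbit would then be periodic and would return to
   its collision point, contradicting the uniqueness of the collision time. *)
From HB Require Import structures.
From mathcomp Require Import all_boot all_order all_algebra.
From mathcomp Require Import all_classical all_reals all_analysis.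
Import Order.TTheory GRing.Theory Num.Theory.
Import numFieldNormedType.Exports.
Local Open Scope classical_set_scope.
Local Open Scope ring_scope.

Section CommonPeriods.
Context {R : realType}.
Implicit Types (l pl n pn : R -> R) (P t : R).

Lemma lam_periodMn {l pl P} (k : nat) :
  lam_period l pl P -> lam_period l pl (k%:R * P).
Proof.
move=> hP; elim: k => [|k IHk] t; first by rewrite mul0r addr0.
have [hl hpl] := hP (t + k%:R * P); have [IHl IHpl] := IHk t.
by rewrite mulrSr mulrDl mul1r addrA hl hpl IHl IHpl.
Qed.

Lemma nu_periodMn {n pn P} (k : nat) :
  nu_period n pn P -> nu_period n pn (k%:R * P).
Proof.
move=> hP; elim: k => [|k IHk] t.
  by rewrite mul0r addr0; split=> //; exists 0; rewrite mulr0 addr0.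
have [[j hj] hpj] := IHk t; have [[j' hj'] hpj'] := hP (t + k%:R * P).
rewrite mulrSr mulrDl mul1r addrA; split; last by rewrite hpj' hpj.
by exists (j + j'); rewrite hj' hj intrD (mulrDr (2 * pi)) addrA.
Qed.

Lemma collision_atD {l pl n pn P t} :
  lam_period l pl P -> nu_period n pn P ->
  collision_at l n t -> collision_at l n (t + P).
Proof.
move=> hl hn [l0 [j hj]]; split; first by rewrite (hl t).1.
have [[j' hj'] _] := hn t; exists (j + j').
by rewrite hj' intrD (mulrDr (2 * pi)); case: hj => ->; [left | right]; rewrite addrA.
Qed.

Lemma rational_ratio_common_multiple {x y : R} :
  0 < x -> 0 < y -> rational (y / x) ->
  exists (a b : nat), (0 < a)%N /\ a%:R * x = b%:R * y.
Proof.
move=> x0 y0 /rationalP [a [b yx]].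
have b0 : b != 0%N by apply: contraTneq (divr_gt0 y0 x0) => b0; rewrite yx b0 invr0 mulr0 ltxx.
have bR0 : (b%:R : R) != 0 by rewrite pnatr_eq0.
have ay : (a%:~R : R) = b%:R * y / x by rewrite -mulrA yx mulrC divfK.
have a0 : 0 < (a%:~R : R) by rewrite ay divr_gt0 // mulr_gt0 // ltr0n lt0n.
exists `|a|%N, b; split; first by rewrite absz_gt0 -(intr_eq0 R) gt_eqF.
by rewrite natr_absz intr_norm (gtr0_norm a0) ay divfK ?gt_eqF.
Qed.

End CommonPeriods.

Theorem corollary4 (R : realType) (d m1 m2 h g : R)
  (T : set ((R * R) * ((R * R) * R)))
  (lam plam nu pnu : R -> R) (Tlam Tnu : R) :
  0 < d -> 0 < m1 -> 0 < m2 -> h < 0 ->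
  regular_torus d m1 m2 h g T ->
  is_orbit d m1 m2 h lam plam nu pnu ->
  (forall t, T (phase_pt (lam t) (plam t) (nu t) (pnu t))) ->
  least_lam_period lam plam Tlam ->
  least_nu_period nu pnu Tnu ->
  (exists t0, collision_at lam nu t0 /\
     forall t, collision_at lam nu t -> t = t0) ->
  @irrational R (Tnu / Tlam).
Proof.
move=> _ _ _ _ _ _ _ [Tlam0 hTlam _] [Tnu0 hTnu _] [t0 [coll0 coll_uniq]] rat.
have [a [b [a0 ab]]] := rational_ratio_common_multiple Tlam0 Tnu0 rat.
have P0 : 0 < a%:R * Tlam by rewrite mulr_gt0 ?ltr0n.
have hlam := lam_periodMn a hTlam.
have hnu := nu_periodMn b hTnu; rewrite -ab in hnu.
have := coll_uniq _ (collision_atD hlam hnu coll0).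
by rewrite -[X in _ = X]addr0 => /addrI P_eq0; rewrite P_eq0 ltxx in P0.
Qed.
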